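(* Let $\varphi:[0,1]\to[0,1]$ be continuous and non-decreasing with $\varphi(0)=0$, $\varphi(1)=1$, and let $m\geq1$ be an integer. Call $\psi:[0,1]\to\mathbb R$ piecewise constant with $m+1$ pieces if there exist $0=t_0\leq t_1\leq\dots\leq t_m\leq t_{m+1}=1$ such that $\psi$ is constant on each $[t_{i-1},t_i)$, $i=1,\dots,m+1$. Then there exists a piecewise constant $\psi$ with $m+1$ pieces and $\psi\leq\varphi$ on $[0,1]$ that attains $$c_m=\inf\left\{\int_0^1(\varphi(t)-\psi(t))\,dt:\ \psi \text{ piecewise constant with } m+1 \text{ pieces},\ \psi\leq\varphi\right\}.$$ *)

From Stdlib Require Import Reals.
From Coquelicot Require Import Coquelicot.
Open Scope R_scope.

Definition piecewise_const (m : nat) (psi : R -> R) : Prop :=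
  exists (t : nat -> R) (c : nat -> R),
    t 0%nat = 0 /\ t (S m) = 1 /\
    (forall i : nat, (i <= m)%nat -> t i <= t (S i)) /\
    (forall i : nat, (1 <= i <= S m)%nat ->
       forall x : R, t (pred i) <= x < t i -> psi x = c i).

Definition admissible (phi : R -> R) (m : nat) (psi : R -> R) : Prop :=
  piecewise_const m psi /\ (forall x : R, 0 <= x <= 1 -> psi x <= phi x).

Definition c_m (phi : R -> R) (m : nat) : Rbar :=
  Glb_Rbar (fun r : R => exists psi : R -> R,
              admissible phi m psi /\ r = RInt (fun t => phi t - psi t) 0 1).

From Stdlib Require Import Reals Lra Lia ClassicalEpsilon.
From Coquelicot Require Import Coquelicot.
Open Scope R_scope.

(* For fixed breakpoints 0 = t_0 <= ... <= t_{m+1} = 1, an admissible step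
   function has value at most phi (t_{i-1}) on [t_{i-1}, t_i), and since phi is
   non-decreasing this value is admissible.  Hence the gap int (phi - psi) is at
   least int phi minus the left Riemann sum  sum_i phi (t_{i-1}) (t_i - t_{i-1}),
   with equality for the staircase psi = phi (t_{i-1}), and it remains to show
   that the left sum attains its maximum over all chains.  This is dynamic
   programming: the maximal sum V_k s over chains of k+1 steps starting at s
   satisfies V_{k+1} s = max_{s <= v <= 1} (phi s (v - s) + V_k v); uniform
   continuity of phi on [0,1] propagates to every V_k, so each maximum exists. *)

(* Stdlib's [continuity_pt] is two-sided; composing with [clamp01] extends a
   function continuous on [0,1] to one continuous everywhere. *)
Definition clamp01 (x : R) : R := Rmax 0 (Rmin 1 x).

Lemma clamp01_in (x : R) : 0 <= clamp01 x <= 1.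
Proof. unfold clamp01, Rmax, Rmin; repeat destruct Rle_dec; lra. Qed.

Lemma clamp01_id (x : R) : 0 <= x <= 1 -> clamp01 x = x.
Proof. intros; unfold clamp01, Rmax, Rmin; repeat destruct Rle_dec; lra. Qed.

Lemma clamp01_lipschitz (x y : R) : Rabs (clamp01 x - clamp01 y) <= Rabs (x - y).
Proof.
  unfold clamp01, Rmax, Rmin; repeat destruct Rle_dec; unfold Rabs;
  repeat destruct Rcase_abs; lra.
Qed.

Lemma Rmax_lipschitz (a b c d : R) :
  Rabs (Rmax a b - Rmax c d) <= Rabs (a - c) + Rabs (b - d).
Proof.
  unfold Rmax; repeat destruct Rle_dec; unfold Rabs; repeat destruct Rcase_abs; lra.
Qed.

Section UnitInterval.

Variable f : R -> R.

Lemma continuity_pt_clamp01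
  (Hf : forall x, 0 <= x <= 1 -> continue_in f (fun y => 0 <= y <= 1) x) (x : R) :
  continuity_pt (fun y => f (clamp01 y)) x.
Proof.
  intros eps Heps.
  destruct (Hf (clamp01 x) (clamp01_in x) eps Heps) as [alp [Halp Hclose]].
  exists alp; split; [exact Halp|].
  intros y [_ Hy]; simpl in *; unfold R_dist in *.
  destruct (Req_dec (clamp01 y) (clamp01 x)) as [E|E].
  - rewrite E, Rminus_eq_0, Rabs_R0; exact Heps.
  - apply Hclose; split.
    + split; [apply clamp01_in | intro; apply E; auto].
    + simpl; unfold R_dist. eapply Rle_lt_trans; [apply clamp01_lipschitz | exact Hy].
Qed.

Lemma uniform_continuity_unit_interval
  (Hf : forall x, 0 <= x <= 1 -> continue_in f (fun y => 0 <= y <= 1) x) :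
  uniform_continuity f (fun x => 0 <= x <= 1).
Proof.
  intros eps.
  destruct (Heine (fun y => f (clamp01 y)) _ (compact_P3 0 1)
              (fun x _ => continuity_pt_clamp01 Hf x) eps) as [d Hd].
  exists d; intros x y Hx Hy Hxy.
  specialize (Hd x y Hx Hy Hxy); rewrite !clamp01_id in Hd; auto.
Qed.

Lemma ex_RInt_unit_interval
  (Hf : forall x, 0 <= x <= 1 -> continue_in f (fun y => 0 <= y <= 1) x) :
  ex_RInt f 0 1.
Proof.
  apply (ex_RInt_ext (fun y => f (clamp01 y))).
  - intros x Hx; rewrite Rmin_left, Rmax_right in Hx by lra.
    rewrite clamp01_id; lra.
  - apply (@ex_RInt_continuous R_CompleteNormedModule); intros z _.
    apply continuity_pt_filterlim, continuity_pt_clamp01, Hf.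
Qed.

Lemma uniform_continuity_continue_in (Hf : uniform_continuity f (fun x => 0 <= x <= 1))
  (x : R) : 0 <= x <= 1 -> continue_in f (fun y => 0 <= y <= 1) x.
Proof.
  intros Hx eps Heps.
  destruct (Hf (mkposreal eps Heps)) as [d Hd].
  exists d; split; [apply cond_pos|].
  intros y [[Hy _] Hyx]; exact (Hd y x Hy Hx Hyx).
Qed.

Lemma uniform_continuity_attains_max (Hf : uniform_continuity f (fun x => 0 <= x <= 1)) :
  exists w, 0 <= w <= 1 /\ forall v, 0 <= v <= 1 -> f v <= f w.
Proof.
  destruct (continuity_ab_maj (fun y => f (clamp01 y)) 0 1) as [w [Hmax Hw]].
  - lra.
  - intros c _; apply continuity_pt_clamp01, uniform_continuity_continue_in, Hf.
  - exists w; split; [exact Hw|]; intros v Hv.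
    specialize (Hmax v Hv); rewrite !clamp01_id in Hmax; auto.
Qed.

End UnitInterval.

Definition chain_from (s : R) (k : nat) (u : nat -> R) : Prop :=
  u 0%nat = s /\ u (S k) = 1 /\ forall i, (i <= k)%nat -> u i <= u (S i).

Definition left_sum (phi : R -> R) (k : nat) (u : nat -> R) : R :=
  sum_f_R0 (fun i => phi (u i) * (u (S i) - u i)) k.

Definition cons_seq (s : R) (u : nat -> R) (i : nat) : R :=
  match i with 0%nat => s | S j => u j end.

Lemma steps_le_mono (u : nat -> R) (k : nat) :
  (forall i, (i <= k)%nat -> u i <= u (S i)) ->
  forall i j, (i <= j <= S k)%nat -> u i <= u j.
Proof.
  intros Hstep i j; induction j as [|j IH]; intros Hij.
  - replace i with 0%nat by lia; lra.
  - destruct (Nat.eq_dec i (S j)) as [->|Hne]; [lra|].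
    eapply Rle_trans; [apply IH; lia | apply Hstep; lia].
Qed.

Lemma chain_from_range (s : R) (k : nat) (u : nat -> R) :
  chain_from s k u -> forall i, (i <= S k)%nat -> s <= u i <= 1.
Proof.
  intros [H0 [H1 Hstep]] i Hi; rewrite <- H0, <- H1.
  split; apply (steps_le_mono u k Hstep); lia.
Qed.

Lemma chain_from_tail (s : R) (k : nat) (u : nat -> R) :
  chain_from s (S k) u -> chain_from (u 1%nat) k (fun i => u (S i)).
Proof.
  intros [_ [H1 Hstep]]; split; [reflexivity | split; [exact H1|]].
  intros i Hi; apply Hstep; lia.
Qed.

Lemma chain_from_cons (s w : R) (k : nat) (u : nat -> R) :
  s <= w -> chain_from w k u -> chain_from s (S k) (cons_seq s u).
Proof.
  intros Hsw [H0 [H1 Hstep]]; split; [reflexivity | split; [exact H1|]].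
  intros [|i] Hi; simpl; [rewrite H0; exact Hsw | apply Hstep; lia].
Qed.

Lemma left_sum_S (phi : R -> R) (k : nat) (u : nat -> R) :
  left_sum phi (S k) u =
  phi (u 0%nat) * (u 1%nat - u 0%nat) + left_sum phi k (fun i => u (S i)).
Proof. unfold left_sum; rewrite decomp_sum by lia; reflexivity. Qed.

Section Bellman.

Variable phi : R -> R.
Hypothesis phi_range : forall x, 0 <= x <= 1 -> 0 <= phi x <= 1.
Hypothesis phi_uc : uniform_continuity phi (fun x => 0 <= x <= 1).

(* Taking [Rmax s v] lets the next point range over the fixed interval [0,1]
   instead of [s,1], so that maxima over [v] can be compared for different [s]. *)
Definition bellman (V : R -> R) (s v : R) : R :=
  phi s * (Rmax s v - s) + V (Rmax s v).

Lemma bellman_diff_le (V : R -> R) (s s' v v' : R) :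
  0 <= s <= 1 -> 0 <= s' <= 1 -> 0 <= v <= 1 ->
  Rabs (bellman V s v - bellman V s' v') <=
  Rabs (phi s - phi s') + (2 * Rabs (s - s') + Rabs (v - v'))
  + Rabs (V (Rmax s v) - V (Rmax s' v')).
Proof.
  intros Hs Hs' Hv; unfold bellman.
  set (w := Rmax s v); set (w' := Rmax s' v').
  assert (Hw : 0 <= w - s <= 1) by (unfold w, Rmax; destruct Rle_dec; lra).
  assert (Hww : Rabs (w - w') <= Rabs (s - s') + Rabs (v - v')) by apply Rmax_lipschitz.
  replace (phi s * (w - s) + V w - (phi s' * (w' - s') + V w'))
    with ((phi s - phi s') * (w - s) + phi s' * ((w - w') - (s - s')) + (V w - V w'))
    by ring.
  destruct (phi_range s' Hs') as [Hp0 Hp1].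
  assert (Rabs ((phi s - phi s') * (w - s)) <= Rabs (phi s - phi s')).
  { rewrite Rabs_mult, (Rabs_pos_eq (w - s)) by lra.
    pose proof (Rabs_pos (phi s - phi s')); nra. }
  assert (Rabs (phi s' * ((w - w') - (s - s'))) <= Rabs (w - w') + Rabs (s - s')).
  { rewrite Rabs_mult, (Rabs_pos_eq (phi s')) by lra.
    pose proof (Rabs_triang (w - w') (- (s - s'))) as Htri.
    rewrite Rabs_Ropp in Htri; fold (w - w' - (s - s')) in Htri.
    pose proof (Rabs_pos (w - w' - (s - s'))); nra. }
  pose proof (Rabs_triang ((phi s - phi s') * (w - s) + phi s' * ((w - w') - (s - s')))
                          (V w - V w')).
  pose proof (Rabs_triang ((phi s - phi s') * (w - s)) (phi s' * ((w - w') - (s - s')))).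
  lra.
Qed.

Lemma bellman_uniform_continuity (V : R -> R) :
  uniform_continuity V (fun x => 0 <= x <= 1) ->
  forall eps, 0 < eps -> exists d, 0 < d /\
    forall s s' v v', 0 <= s <= 1 -> 0 <= s' <= 1 -> 0 <= v <= 1 -> 0 <= v' <= 1 ->
    Rabs (s - s') < d -> Rabs (v - v') < d ->
    Rabs (bellman V s v - bellman V s' v') < eps.
Proof.
  intros HV eps Heps.
  destruct (phi_uc (mkposreal (eps / 4) ltac:(lra))) as [d1 Hd1].
  destruct (HV (mkposreal (eps / 4) ltac:(lra))) as [d2 Hd2]; simpl in *.
  pose proof (cond_pos d1); pose proof (cond_pos d2).
  exists (Rmin d1 (Rmin (d2 / 2) (eps / 12))).
  split; [repeat apply Rmin_glb_lt; lra|].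
  intros s s' v v' Hs Hs' Hv Hv' Hss Hvv.
  pose proof (Rmin_l d1 (Rmin (d2 / 2) (eps / 12))).
  pose proof (Rmin_r d1 (Rmin (d2 / 2) (eps / 12))).
  pose proof (Rmin_l (d2 / 2) (eps / 12)); pose proof (Rmin_r (d2 / 2) (eps / 12)).
  assert (Hw : forall x y, 0 <= x <= 1 -> 0 <= y <= 1 -> 0 <= Rmax x y <= 1)
    by (intros x y; unfold Rmax; destruct Rle_dec; lra).
  pose proof (Rmax_lipschitz s v s' v').
  assert (Rabs (phi s - phi s') < eps / 4) by (apply Hd1; auto; lra).
  assert (Rabs (V (Rmax s v) - V (Rmax s' v')) < eps / 4) by (apply Hd2; auto; lra).
  pose proof (bellman_diff_le V s s' v v' Hs Hs' Hv); lra.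
Qed.

Lemma bellman_max (V : R -> R) :
  uniform_continuity V (fun x => 0 <= x <= 1) ->
  exists W, uniform_continuity W (fun x => 0 <= x <= 1) /\
    forall s, 0 <= s <= 1 ->
      (forall v, 0 <= v <= 1 -> bellman V s v <= W s) /\
      (exists v, 0 <= v <= 1 /\ bellman V s v = W s).
Proof.
  intros HV; pose proof (bellman_uniform_continuity V HV) as Hbc.
  assert (Hargmax : forall s, exists w, 0 <= s <= 1 ->
    0 <= w <= 1 /\ forall v, 0 <= v <= 1 -> bellman V s v <= bellman V s w).
  { intros s; destruct (Rle_dec 0 s); [destruct (Rle_dec s 1)|];
      try (exists 0; intros; lra).
    destruct (uniform_continuity_attains_max (bellman V s)) as [w Hw].
    - intros eps; destruct (Hbc eps (cond_pos eps)) as [d [Hd Hclose]].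
      exists (mkposreal d Hd); intros v v' Hv Hv' Hvv; apply Hclose; auto.
      rewrite Rminus_eq_0, Rabs_R0; exact Hd.
    - exists w; intros _; exact Hw. }
  destruct (choice _ Hargmax) as [argmax Hmax].
  exists (fun s => bellman V s (argmax s)); split.
  - intros eps; destruct (Hbc eps (cond_pos eps)) as [d [Hd Hclose]].
    exists (mkposreal d Hd); intros s s' Hs Hs' Hss; simpl in Hss.
    destruct (Hmax s Hs) as [Hws Hms]; destruct (Hmax s' Hs') as [Hws' Hms'].
    assert (Hvv : Rabs (argmax s - argmax s) < d) by (rewrite Rminus_eq_0, Rabs_R0; exact Hd).
    assert (Hvv' : Rabs (argmax s' - argmax s') < d) by (rewrite Rminus_eq_0, Rabs_R0; exact Hd).
    pose proof (Hclose s s' _ _ Hs Hs' Hws Hws Hss Hvv).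
    pose proof (Hclose s s' _ _ Hs Hs' Hws' Hws' Hss Hvv').
    pose proof (Hms (argmax s') Hws'); pose proof (Hms' (argmax s) Hws).
    apply Rabs_def1;
      repeat match goal with H : Rabs _ < _ |- _ => apply Rabs_def2 in H; destruct H end;
      lra.
  - intros s Hs; destruct (Hmax s Hs) as [Hw Hm].
    split; [exact Hm | exists (argmax s); split; [exact Hw | reflexivity]].
Qed.

Definition max_left_sum (k : nat) (V : R -> R) : Prop :=
  forall s, 0 <= s <= 1 ->
    (forall u, chain_from s k u -> left_sum phi k u <= V s) /\
    (exists u, chain_from s k u /\ left_sum phi k u = V s).

Lemma max_left_sum_exists (k : nat) :
  exists V, uniform_continuity V (fun x => 0 <= x <= 1) /\ max_left_sum k V.
Proof.
  induction k as [|k [V [HVuc HV]]].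
  - exists (fun s => bellman (fun _ => 0) s 1); split.
    + intros eps.
      assert (Hzero : uniform_continuity (fun _ : R => 0) (fun x => 0 <= x <= 1)).
      { intros e; exists e; intros; rewrite Rminus_eq_0, Rabs_R0; apply cond_pos. }
      destruct (bellman_uniform_continuity _ Hzero eps (cond_pos eps)) as [d [Hd Hclose]].
      exists (mkposreal d Hd); intros s s' Hs Hs' Hss; apply Hclose; auto; try lra.
      rewrite Rminus_eq_0, Rabs_R0; exact Hd.
    + intros s Hs; unfold bellman; rewrite Rmax_right by lra; split.
      * intros u [H0 [H1 _]]; unfold left_sum; simpl; rewrite H0, H1; lra.
      * exists (cons_seq s (fun _ => 1)); split.
        -- split; [reflexivity | split; [reflexivity|]].
           intros i Hi; replace i with 0%nat by lia; simpl; lra.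
        -- unfold left_sum; simpl; ring.
  - destruct (bellman_max V HVuc) as [W [HWuc HW]].
    exists W; split; [exact HWuc|]; intros s Hs.
    destruct (HW s Hs) as [Hub [v [Hv Hvmax]]]; split.
    + intros u Hu.
      destruct (chain_from_range s (S k) u Hu 1 ltac:(lia)) as [Hu1 Hu1'].
      pose proof (Hub (u 1%nat) ltac:(lra)) as Hle; unfold bellman in Hle.
      rewrite Rmax_right in Hle by lra.
      destruct (HV (u 1%nat) ltac:(lra)) as [Htail _].
      pose proof (Htail _ (chain_from_tail s k u Hu)).
      destruct Hu as [H0 _]; rewrite left_sum_S, H0; lra.
    + assert (Hw : s <= Rmax s v <= 1) by (unfold Rmax; destruct Rle_dec; lra).
      destruct (HV (Rmax s v) ltac:(lra)) as [_ [u [Hu Hsum]]].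
      exists (cons_seq s u); split.
      * apply (chain_from_cons s (Rmax s v)); [lra | exact Hu].
      * rewrite left_sum_S; change (fun i => cons_seq s u (S i)) with u.
        destruct Hu as [H0 _]; simpl; rewrite Hsum, H0, <- Hvmax; reflexivity.
Qed.

End Bellman.

Section PiecewiseConstant.

Variables (psi : R -> R) (m : nat) (t c : nat -> R).
Hypothesis t_0 : t 0%nat = 0.
Hypothesis t_step : forall i, (i <= m)%nat -> t i <= t (S i).
Hypothesis psi_piece : forall i, (1 <= i <= S m)%nat ->
  forall x, t (pred i) <= x < t i -> psi x = c i.

Lemma is_RInt_piecewise_const :
  is_RInt psi 0 (t (S m)) (sum_f_R0 (fun i => c (S i) * (t (S i) - t i)) m).
Proof.
  assert (Hpiece : forall i, (i <= m)%nat ->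
    is_RInt psi (t i) (t (S i)) (c (S i) * (t (S i) - t i))).
  { intros i Hi; apply (is_RInt_ext (fun _ => c (S i))).
    - intros x Hx; rewrite Rmin_left, Rmax_right in Hx by (apply t_step; auto).
      symmetry; apply (psi_piece (S i)); [lia | simpl; lra].
    - replace (c (S i) * (t (S i) - t i)) with (scal (t (S i) - t i) (c (S i)))
        by (unfold scal; simpl; unfold mult; simpl; ring).
      apply (@is_RInt_const R_NormedModule). }
  enough (H : forall k, (k <= m)%nat ->
    is_RInt psi 0 (t (S k)) (sum_f_R0 (fun i => c (S i) * (t (S i) - t i)) k))
    by exact (H m (le_n m)).
  induction k as [|k IH]; intros Hk; simpl.
  - rewrite <- t_0; apply Hpiece; lia.
  - apply (is_RInt_Chasles psi 0 (t (S k)) (t (S (S k)))); [apply IH | apply Hpiece]; lia.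
Qed.

Lemma RInt_sub_piecewise_const (phi : R -> R) :
  ex_RInt phi 0 1 -> t (S m) = 1 ->
  RInt (fun x => phi x - psi x) 0 1 =
  RInt phi 0 1 - sum_f_R0 (fun i => c (S i) * (t (S i) - t i)) m.
Proof.
  intros Hphi Ht1; apply is_RInt_unique.
  pose proof is_RInt_piecewise_const as Hpsi; rewrite Ht1 in Hpsi.
  exact (@is_RInt_minus R_NormedModule _ _ _ _ _ _ (RInt_correct _ _ _ Hphi) Hpsi).
Qed.

End PiecewiseConstant.

Lemma RInt_sub_admissible_ge (phi psi : R -> R) (m : nat) :
  ex_RInt phi 0 1 -> admissible phi m psi ->
  exists u, chain_from 0 m u /\
    RInt phi 0 1 - left_sum phi m u <= RInt (fun x => phi x - psi x) 0 1.
Proof.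
  intros Hphi [[t [c [Ht0 [Ht1 [Hstep Hpiece]]]]] Hle].
  assert (Ht : chain_from 0 m t) by (split; [exact Ht0 | split; assumption]).
  exists t; split; [exact Ht|].
  rewrite (RInt_sub_piecewise_const psi m t c Ht0 Hstep Hpiece phi Hphi Ht1).
  enough (sum_f_R0 (fun i => c (S i) * (t (S i) - t i)) m <= left_sum phi m t) by lra.
  apply sum_Rle; intros i Hi.
  destruct (chain_from_range 0 m t Ht i ltac:(lia)) as [Hti Hti'].
  pose proof (Hstep i Hi).
  destruct (Req_dec (t i) (t (S i))) as [E|E]; [rewrite E; lra|].
  assert (psi (t i) = c (S i)) by (apply (Hpiece (S i)); [lia | simpl; lra]).
  assert (psi (t i) <= phi (t i)) by (apply Hle; lra).
  apply Rmult_le_compat_r; lra.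
Qed.

Fixpoint staircase (t : nat -> R) (k : nat) (x : R) : R :=
  match k with
  | 0%nat => t 0%nat
  | S j => if Rle_dec (t (S j)) x then t (S j) else staircase t j x
  end.

Section Staircase.

Variables (t : nat -> R) (m : nat).
Hypothesis t_step : forall i, (i <= m)%nat -> t i <= t (S i).

Lemma staircase_piece (i : nat) (x : R) :
  (1 <= i <= S m)%nat -> t (pred i) <= x < t i -> staircase t m x = t (pred i).
Proof.
  intros Hi Hx; enough (H : forall k, (pred i <= k <= m)%nat -> staircase t k x = t (pred i))
    by (apply H; lia).
  induction k as [|k IH]; intros Hk; simpl.
  - f_equal; lia.
  - destruct (Nat.eq_dec (pred i) (S k)) as [E|E].
    + rewrite E in *; destruct Rle_dec; [reflexivity | lra].
    + destruct Rle_dec as [r|r]; [|apply IH; lia].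
      assert (t i <= t (S k)) by (apply (steps_le_mono t m t_step); lia); lra.
Qed.

Lemma staircase_range (x : R) : t 0%nat <= x -> t 0%nat <= staircase t m x <= x.
Proof.
  intros Hx; enough (H : forall k, (k <= m)%nat -> t 0%nat <= staircase t k x <= x)
    by (apply H; lia).
  induction k as [|k IH]; intros Hk; simpl; [lra|].
  destruct Rle_dec as [r|r]; [|apply IH; lia].
  split; [apply (steps_le_mono t m t_step); lia | exact r].
Qed.

End Staircase.

Section StaircaseOfChain.

Variables (phi : R -> R) (m : nat) (t : nat -> R).
Hypothesis t_chain : chain_from 0 m t.

Lemma staircase_piecewise_const (i : nat) :
  (1 <= i <= S m)%nat -> forall x, t (pred i) <= x < t i ->
  phi (staircase t m x) = phi (t (pred i)).
Proof.
  destruct t_chain as [_ [_ Hstep]]; intros Hi x Hx.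
  rewrite (staircase_piece t m Hstep i x Hi Hx); reflexivity.
Qed.

Lemma staircase_admissible :
  (forall x y, 0 <= x -> x <= y -> y <= 1 -> phi x <= phi y) ->
  admissible phi m (fun x => phi (staircase t m x)).
Proof.
  destruct t_chain as [Ht0 [Ht1 Hstep]]; intros Hmono; split.
  - exists t, (fun i => phi (t (pred i))); repeat split; try assumption.
    exact staircase_piecewise_const.
  - intros x Hx; destruct (staircase_range t m Hstep x ltac:(lra)); apply Hmono; lra.
Qed.

Lemma RInt_sub_staircase :
  ex_RInt phi 0 1 ->
  RInt (fun x => phi x - phi (staircase t m x)) 0 1 = RInt phi 0 1 - left_sum phi m t.
Proof.
  destruct t_chain as [Ht0 [Ht1 Hstep]]; intros Hphi.
  exact (RInt_sub_piecewise_const _ m t _ Ht0 Hstep staircase_piecewise_const phi Hphi Ht1).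
Qed.

End StaircaseOfChain.

Lemma c_m_attained (phi psi0 : R -> R) (m : nat) :
  admissible phi m psi0 ->
  (forall psi, admissible phi m psi ->
     RInt (fun x => phi x - psi0 x) 0 1 <= RInt (fun x => phi x - psi x) 0 1) ->
  c_m phi m = Finite (RInt (fun x => phi x - psi0 x) 0 1).
Proof.
  intros Hpsi0 Hmin; apply is_glb_Rbar_unique; split.
  - intros r [psi [Hpsi ->]]; exact (Hmin psi Hpsi).
  - intros b Hb; apply Hb; exists psi0; split; [exact Hpsi0 | reflexivity].
Qed.

Theorem proposition4 (phi : R -> R) (m : nat)
  (Hcont : forall x : R, 0 <= x <= 1 -> continue_in phi (fun y => 0 <= y <= 1) x)
  (Hrange : forall x : R, 0 <= x <= 1 -> 0 <= phi x <= 1)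
  (Hmono : forall x y : R, 0 <= x -> x <= y -> y <= 1 -> phi x <= phi y)
  (H0 : phi 0 = 0) (H1 : phi 1 = 1)
  (Hm : (1 <= m)%nat) :
  exists psi : R -> R,
    admissible phi m psi /\
    Finite (RInt (fun t => phi t - psi t) 0 1) = c_m phi m.
Proof.
  pose proof (ex_RInt_unit_interval phi Hcont) as Hint.
  destruct (max_left_sum_exists phi Hrange (uniform_continuity_unit_interval phi Hcont) m)
    as [V [_ HV]].
  destruct (HV 0 ltac:(lra)) as [Hbound [t [Ht Hopt]]].
  pose proof (staircase_admissible phi m t Ht Hmono) as Hadm.
  exists (fun x => phi (staircase t m x)); split; [exact Hadm|].
  symmetry; apply c_m_attained; [exact Hadm|].
  intros psi Hpsi; rewrite (RInt_sub_staircase phi m t Ht Hint).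
  destruct (RInt_sub_admissible_ge phi psi m Hint Hpsi) as [u [Hu Hgap_u]].
  pose proof (Hbound u Hu); lra.
Qed.
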